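(* Let $\mathbf P=(P,\leq,{}',0,1)$ be a finite orthomodular poset which is not a lattice. Then its Dedekind-MacNeille completion $\mathrm{DM}(\mathbf P)$ is not orthomodular.
   Context: For $M\subseteq P$, $U(M)$, $L(M)$ are the sets of upper and lower bounds. A poset with complementation is a bounded poset with antitone involution $'$ ($x\le y\Rightarrow y'\le x'$, $x''=x$) with $L(\{x,x'\})=\{0\}$, $U(\{x,x'\})=\{1\}$. It is an orthomodular poset if for all $x\le y'$ the join $x\vee y$ exists and $((x\vee y)\wedge y')\vee y= x\vee y$ whenever defined (with $x\wedge y=(x'\vee y')'$). The Dedekind-MacNeille completion $\mathrm{DM}(\mathbf P)$ is the complete lattice of subsets $B\subseteq P$ with $L(U(B))=B$ under inclusion, with antitone involution $X'=L(\{u'\mid u\in X\})$; a lattice with complementation is orthomodular if $x\vee y=((x\vee y)\wedge y')\vee y$ for all $x,y$. *)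

From mathcomp Require Import all_boot.
Set Implicit Arguments. Unset Strict Implicit. Unset Printing Implicit Defensive.

Section Defs.
Variables (T : finType) (le : rel T).

Definition ubs (M : {set T}) : {set T} := [set u | [forall m in M, le m u]].
Definition lbs (M : {set T}) : {set T} := [set l | [forall m in M, le l m]].

Definition is_poset : Prop :=
  (forall x, le x x) /\ (forall x y, le x y -> le y x -> x = y) /\
  (forall x y w, le x y -> le y w -> le x w).

Definition bounded (z o : T) : Prop := forall x, le z x /\ le x o.

Definition is_join (x y j : T) : Prop :=
  j \in ubs [set x; y] /\ forall u, u \in ubs [set x; y] -> le j u.
Definition is_glb (x y m : T) : Prop :=
  m \in lbs [set x; y] /\ forall l, l \in lbs [set x; y] -> le l m.

Definition is_lattice : Prop :=
  forall x y, (exists j, is_join x y j) /\ (exists m, is_glb x y m).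

Variables (c : T -> T) (z o : T).

Definition poset_with_complementation : Prop :=
  is_poset /\ bounded z o /\
  (forall x y, le x y -> le (c y) (c x)) /\ (forall x, c (c x) = x) /\
  (forall x, lbs [set x; c x] = [set z]) /\ (forall x, ubs [set x; c x] = [set o]).

Definition is_meet (x y m : T) : Prop := is_join (c x) (c y) (c m).

Definition orthomodular_poset : Prop :=
  poset_with_complementation /\
  forall x y, le x (c y) ->
    (exists j, is_join x y j) /\
    (forall j m k, is_join x y j -> is_meet j (c y) m -> is_join m y k -> k = j).

(* Dedekind-MacNeille completion: closed subsets B with L(U(B)) = B,
   ordered by inclusion, with involution X' = L({u' | u in X}). *)
Definition DM_closed (B : {set T}) : Prop := lbs (ubs B) = B.
Definition DM_compl (X : {set T}) : {set T} := lbs (c @: X).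

Definition DM_is_join (X Y J : {set T}) : Prop :=
  DM_closed J /\ X \subset J /\ Y \subset J /\
  forall K, DM_closed K -> X \subset K -> Y \subset K -> J \subset K.
Definition DM_is_meet (X Y M : {set T}) : Prop :=
  DM_closed M /\ M \subset X /\ M \subset Y /\
  forall K, DM_closed K -> K \subset X -> K \subset Y -> K \subset M.

(* DM(P) is orthomodular: x \/ y = ((x \/ y) /\ y') \/ y for all x, y in DM(P) *)
Definition DM_orthomodular : Prop :=
  forall X Y J M K, DM_closed X -> DM_closed Y ->
    DM_is_join X Y J -> DM_is_meet J (DM_compl Y) M -> DM_is_join M Y K ->
    K = J.

End Defs.

(** Let a, b have no join and let X = L(U{a,b}). Pick a maximal element m of
    X and put Y = L{m}, so Y <= X in DM(P). Every t in X /\ Y' satisfies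
    t <= m', so the join t \/ m exists in P; it lies in X and is above m,
    hence equals m, i.e. t <= m. Thus X /\ Y' <= Y, and orthomodularity of
    DM(P) would force Y = X; but then m is the join of a and b. *)

From Stdlib Require Import Classical.
From mathcomp Require Import all_boot.

Set Implicit Arguments. Unset Strict Implicit. Unset Printing Implicit Defensive.

Section Bounds.
Variables (T : finType) (le : rel T).

Lemma lbsP (S : {set T}) l :
  reflect (forall m, m \in S -> le l m) (l \in lbs le S).
Proof. by rewrite inE; apply: (iffP forall_inP). Qed.

Lemma ubsP (S : {set T}) u :
  reflect (forall m, m \in S -> le m u) (u \in ubs le S).
Proof. by rewrite inE; apply: (iffP forall_inP). Qed.

Lemma lbs1 m l : (l \in lbs le [set m]) = le l m.
Proof.
by apply/lbsP/idP => [|lm _ /set1P ->]; last exact: lm; apply; rewrite inE.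
Qed.

Lemma ubs2P x y u : reflect (le x u /\ le y u) (u \in ubs le [set x; y]).
Proof.
apply: (iffP (ubsP _ _)) => [H|[xu yu] v /set2P[]->] //.
by split; apply: H; rewrite !inE eqxx ?orbT.
Qed.

Lemma lbs2P x y l : reflect (le l x /\ le l y) (l \in lbs le [set x; y]).
Proof.
apply: (iffP (lbsP _ _)) => [H|[lx ly] v /set2P[]->] //.
by split; apply: H; rewrite !inE eqxx ?orbT.
Qed.

Lemma mem_lbs_ubs (S : {set T}) x : x \in S -> x \in lbs le (ubs le S).
Proof. by move=> xS; apply/lbsP => u /ubsP; apply. Qed.

Lemma lbs_closed (S : {set T}) : DM_closed le (lbs le S).
Proof.
apply/setP => t; apply/idP/idP; last exact: mem_lbs_ubs.
by move/lbsP => H; apply/lbsP => s sS; apply: H; apply/ubsP => l /lbsP; apply.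
Qed.

Lemma lbsU (S S' : {set T}) : lbs le S :&: lbs le S' = lbs le (S :|: S').
Proof.
apply/setP => t; rewrite inE; apply/andP/idP.
- by case=> /lbsP H1 /lbsP H2; apply/lbsP => m /setUP[/H1|/H2].
- by move/lbsP => H; split; apply/lbsP => m Hm; apply: H; rewrite inE Hm ?orbT.
Qed.

Lemma DM_closedI (X Y : {set T}) :
  DM_closed le X -> DM_closed le Y -> DM_closed le (X :&: Y).
Proof. by move=> <- <-; rewrite lbsU; apply: lbs_closed. Qed.

Lemma DM_is_meetI (X Y : {set T}) :
  DM_closed le X -> DM_closed le Y -> DM_is_meet le X Y (X :&: Y).
Proof.
move=> clX clY; split; first exact: DM_closedI.
split; first exact: subsetIl; split; first exact: subsetIr.
by move=> K _ KX KY; rewrite subsetI KX KY.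
Qed.

Lemma DM_is_join_subl (X Y : {set T}) :
  DM_closed le Y -> X \subset Y -> DM_is_join le X Y Y.
Proof. by move=> clY XY; do 3!split => //; move=> K _ _. Qed.

Lemma DM_is_join_subr (X Y : {set T}) :
  DM_closed le X -> Y \subset X -> DM_is_join le X Y X.
Proof. by move=> clX YX; do 3!split => //; move=> K _. Qed.

Variable c : T -> T.

Lemma DM_compl_closed (X : {set T}) : DM_closed le (DM_compl le c X).
Proof. exact: lbs_closed. Qed.

Lemma DM_orthomodular_eq (X Y : {set T}) :
  DM_orthomodular le c -> DM_closed le X -> DM_closed le Y ->
  Y \subset X -> X :&: DM_compl le c Y \subset Y -> Y = X.
Proof.
move=> DMom clX clY YX XY'Y.
apply: (DMom X Y X _ Y clX clY (DM_is_join_subr clX YX)).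
- exact: DM_is_meetI (DM_compl_closed Y).
- exact: DM_is_join_subl.
Qed.

End Bounds.

Section Poset.
Variables (T : finType) (le : rel T).
Hypotheses (le_refl : forall x, le x x)
           (le_anti : forall x y, le x y -> le y x -> x = y)
           (le_trans : forall x y w, le x y -> le y w -> le x w).

Lemma exists_maximal (S : {set T}) a : a \in S ->
  exists2 m, m \in S & forall j, j \in S -> le m j -> j = m.
Proof.
move=> aS; case: (@arg_maxnP _ a [in S] (fun i => #|[set x | le x i]|)) => //.
move=> m mS mmax; exists m => // j jS mj.
have sub : [set x | le x m] \subset [set x | le x j].
  by apply/subsetP => x; rewrite !inE => /le_trans; apply.
have /eqP eq_down : [set x | le x m] == [set x | le x j].
  by rewrite eqEcard sub; apply: mmax.
have : j \in [set x | le x j] by rewrite inE.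
by rewrite -eq_down inE => jm; exact: le_anti jm mj.
Qed.

Lemma le_mem_lbs (U : {set T}) t m :
  le t m -> m \in lbs le U -> t \in lbs le U.
Proof. by move=> tm /lbsP mU; apply/lbsP => u /mU; apply: le_trans. Qed.

Lemma join_mem_lbs (U : {set T}) x y j :
  is_join le x y j -> x \in lbs le U -> y \in lbs le U -> j \in lbs le U.
Proof.
move=> [_ jmin] /lbsP xU /lbsP yU; apply/lbsP => u uU.
by apply: jmin; apply/ubs2P; split; [apply: xU | apply: yU].
Qed.

Lemma lbs1_eq_join x y m :
  lbs le [set m] = lbs le (ubs le [set x; y]) -> is_join le x y m.
Proof.
move=> eqL; split.
- apply/ubs2P; rewrite -!(lbs1 le) eqL.
  by split; apply: mem_lbs_ubs; rewrite !inE eqxx ?orbT.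
- have : m \in lbs le [set m] by rewrite lbs1.
  by rewrite eqL => /lbsP.
Qed.

Variable c : T -> T.
Hypothesis orth_join : forall x y, le x (c y) -> exists j, is_join le x y j.

(* The join t \/ m lies in L(U) above m, so maximality collapses it to m. *)
Lemma orth_le_maximal (U : {set T}) m t :
  m \in lbs le U -> (forall j, j \in lbs le U -> le m j -> j = m) ->
  t \in lbs le U -> le t (c m) -> le t m.
Proof.
move=> mU mmax tU tm'; have [j jtm] := orth_join tm'.
have <- : j = m.
  by apply: mmax; [exact: join_mem_lbs jtm tU mU | case: jtm => /ubs2P[]].
by case: jtm => /ubs2P[].
Qed.

End Poset.

Section Complementation.
Variables (T : finType) (le : rel T) (c : T -> T).
Hypotheses (c_anti : forall x y, le x y -> le (c y) (c x))
           (c_invol : forall x, c (c x) = x).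

Lemma le_compl x y : le x (c y) -> le y (c x).
Proof. by move=> /c_anti; rewrite c_invol. Qed.

Lemma compl_le x y : le (c x) y -> le (c y) x.
Proof. by move=> /c_anti; rewrite c_invol. Qed.

Lemma glb_compl_join x y j : is_join le (c x) (c y) j -> is_glb le x y (c j).
Proof.
move=> [/ubs2P[xj yj] jmin]; split.
- by apply/lbs2P; split; apply: compl_le.
- move=> l /lbs2P[lx ly]; apply: le_compl; apply: jmin.
  by apply/ubs2P; split; apply: c_anti.
Qed.

Lemma exists_pair_without_join : ~ is_lattice le ->
  exists a b, ~ exists j, is_join le a b j.
Proof.
move=> nlat; apply: NNPP => no_pair; apply: nlat => x y.
have joins u v : exists j, is_join le u v j.
  by apply: NNPP => nj; apply: no_pair; exists u, v.
split => //; have [j jxy] := joins (c x) (c y).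
by exists (c j); apply: glb_compl_join.
Qed.

End Complementation.

Theorem corollary2 (T : finType) (le : rel T) (c : T -> T) (z o : T) :
  orthomodular_poset le c z o -> ~ is_lattice le -> ~ DM_orthomodular le c.
Proof.
move=> [[[le_refl [le_anti le_trans]] [_ [c_anti [c_invol _]]]] omp] nlat DMom.
have orth_join x y : le x (c y) -> exists j, is_join le x y j.
  by move=> /omp[].
have [a [b no_join]] := exists_pair_without_join c_anti c_invol nlat.
set X := lbs le (ubs le [set a; b]).
have aX : a \in X by apply: mem_lbs_ubs; rewrite !inE eqxx.
have [m mX mmax] := exists_maximal le_refl le_anti le_trans aX.
set Y := lbs le [set m].
have YX : Y \subset X.
  by apply/subsetP => t; rewrite lbs1 => tm; apply: le_mem_lbs tm mX.
have XY'Y : X :&: DM_compl le c Y \subset Y.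
  apply/subsetP => t /setIP[tX /lbsP tY']; rewrite lbs1.
  apply: (orth_le_maximal orth_join mX mmax tX); apply: tY'.
  by apply/imsetP; exists m; rewrite ?lbs1.
have eqYX := DM_orthomodular_eq DMom (lbs_closed _ _) (lbs_closed _ _) YX XY'Y.
by apply: no_join; exists m; apply: lbs1_eq_join.
Qed.
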